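(* Let $k$ be a field of characteristic $0$, $A=kQ_A/I_A$ a radical square zero algebra, and $B$ the algebra obtained by gluing two distinct non-isolated vertices $e_1,e_n$ lying in the same block of $A$. If $Z_{spp}=0$, then there is a Lie algebra isomorphism $\mathrm{HH}^1(B)\cong\mathrm{HH}^1(A)\times k$.
   Context: A radical square zero algebra is $A=kQ_A/I_A$ with $I_A$ generated by all paths of length 2 of the finite quiver $Q_A$. Gluing: $B\subseteq A$ generated by $f_1=e_1+e_n$, the other vertex idempotents $f_i=e_i$ and all arrows; $B\cong kQ_B/I_B$ with $Q_B$ obtained by identifying $e_1,e_n$ to $f_1$ (arrow $\alpha\mapsto\alpha^*$, path $p\mapsto p^*$, $e_1^*=e_n^*=f_1$) and $I_B$ generated by all length-2 paths of $Q_B$. Blocks of $A$ correspond to connected components of $Q_A$. For path sets $X,Y$, $k(X\|Y)$ has basis the pairs $x\|y$ of parallel paths. $\delta^1_B:k((Q_B)_1\|\mathcal B_B)\to k((Q_B)_2\|\mathcal B_B)$ ($\mathcal B_B$ = vertices and arrows of $Q_B$), $a\|\gamma\mapsto\sum_{r}r\|r^{a\|\gamma}$ over length-2 paths $r$, where $r^{a\|\gamma}$ is the sum over occurrences of $a$ in $r$ of the path obtained by replacing that occurrence by $\gamma$, keeping only paths in $\mathcal B_B$. A special pair is $(\alpha,p)$ with $\alpha$ an arrow of $Q_A$ starting or ending at $e_1$ or $e_n$, $p$ a vertex or arrow of $Q_A$, $\alpha^*$ parallel to $p^*$ in $Q_B$ but $\alpha$ not parallel to $p$ in $Q_A$; $Z_{spp}$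 is the intersection of $\mathrm{Ker}\,\delta^1_B$ with the span of the $\alpha^*\|p^*$ over special pairs. *)

From HB Require Import structures.
From mathcomp Require Import all_boot all_order all_algebra.
Set Implicit Arguments. Unset Strict Implicit. Unset Printing Implicit Defensive.
Import Order.TTheory GRing.Theory Num.Theory.
Local Open Scope ring_scope.

(** * Finite-dimensional algebras given by a basis B and structure
    constants [m : B -> B -> option B] (product of two basis elements is
    either a basis element or zero). *)
Section StructAlg.
Variables (k : fieldType) (B : finType) (m : B -> B -> option B).

Local Notation elt := {ffun B -> k}.
Local Notation endo := {ffun B -> {ffun B -> k}}.
Definition scl (c : k) (x : elt) : elt := [ffun d => c * x d].
Definition sclE (c : k) (M : endo) : endo := [ffun b => scl c (M b)].
Definition dlt (b : B) : elt := [ffun c => (c == b)%:R].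
Definition mulm (x y : elt) : elt :=
  \sum_(b : B) \sum_(c : B) scl (x b * y c) (oapp dlt 0 (m b c)).

(* k-linear endomorphisms, given by the images of the basis elements *)
Definition app (M : endo) (x : elt) : elt := \sum_(b : B) scl (x b) (M b).
Definition comp (M N : endo) : endo := [ffun b => app M (N b)].
Definition lbr (M N : endo) : endo := comp M N - comp N M.

Definition isDer (M : endo) : Prop :=
  forall b c, app M (mulm (dlt b) (dlt c)) = mulm (M b) (dlt c) + mulm (dlt b) (M c).
Definition isInn (M : endo) : Prop :=
  exists a : elt, forall b, M b = mulm a (dlt b) - mulm (dlt b) a.
End StructAlg.

(** HH^1(X) = Der(X)/Inn(X) with the commutator bracket.
    [HH1_iso_times_k mX mY] : there is a Lie algebra isomorphism
    HH^1(X) ~= HH^1(Y) x k  (k abelian), presented through a linear lift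
    (f,g) : Der(X) -> Der(Y) x k of the isomorphism on the quotients. *)
Definition HH1_iso_times_k (k : fieldType) (BX BY : finType)
  (mX : BX -> BX -> option BX) (mY : BY -> BY -> option BY) : Prop :=
  exists (f : {ffun BX -> {ffun BX -> k}} -> {ffun BY -> {ffun BY -> k}}) (g : {ffun BX -> {ffun BX -> k}} -> k),
  [/\ (forall D, isDer mX D -> isDer mY (f D)),
      (forall c D1 D2, isDer mX D1 -> isDer mX D2 ->
          f (sclE c D1 + D2) = sclE c (f D1) + f D2 /\ g (sclE c D1 + D2) = c * g D1 + g D2),
      (forall D, isDer mX D -> ((isInn mY (f D) /\ g D = 0) <-> isInn mX D)),
      (forall D' c, isDer mY D' ->
          exists D, [/\ isDer mX D, isInn mY (f D - D') & g D = c]) &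
      (forall D1 D2, isDer mX D1 -> isDer mX D2 ->
          isInn mY (f (lbr D1 D2) - lbr (f D1) (f D2)) /\ g (lbr D1 D2) = 0)].

(** Basis: vertices (inl) and arrows (inr); paths are concatenated left to
    right: e_{s a} a = a = a e_{t a}; all paths of length 2 vanish. *)
Section RSZ.
Variables (V E : finType) (s t : E -> V).

Definition srcb (b : V + E) : V := match b with inl v => v | inr a => s a end.
Definition tgtb (b : V + E) : V := match b with inl v => v | inr a => t a end.
Definition parb (b c : V + E) : bool := (srcb b == srcb c) && (tgtb b == tgtb c).

Definition rszm (b c : V + E) : option (V + E) :=
  match b, c with
  | inl i, inl j => if i == j then Some (inl i) else None
  | inl i, inr a => if s a == i then Some (inr a) else None
  | inr a, inl j => if t a == j then Some (inr a) else None
  | inr _, inr _ => None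
  end.

Definition non_isolated (v : V) : bool := [exists a, (s a == v) || (t a == v)].
(* same connected component of the underlying graph (= same block) *)
Definition adj : rel V :=
  fun u v => [exists a, ((s a == u) && (t a == v)) || ((s a == v) && (t a == u))].
Definition same_block (u v : V) : bool := connect adj u v.
End RSZ.

Section Glue.
Variables (V E : finType) (s t : E -> V) (v1 vn : V) (h : v1 != vn).

Definition gV := {v : V | v != vn}.
Definition glue (v : V) : gV := insubd (exist (fun x => x != vn) v1 h : gV) v.
Definition gs (a : E) : gV := glue (s a).
Definition gt (a : E) : gV := glue (t a).
Definition star (b : V + E) : gV + E :=
  match b with inl v => inl (glue v) | inr a => inr a end.

Definition special (a : E) (p : V + E) : bool :=
  [&& [|| s a == v1, s a == vn, t a == v1 | t a == vn],
      parb gs gt (inr a) (star p) & ~~ parb s t (inr a) p].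

(* coefficient of r||g' (r = a1 a2 a length-2 path of Q_B, g' in B_B) in
   delta^1_B(a||g): sum over the occurrences of a in r of the path obtained
   by replacing that occurrence by g, kept only if it lies in B_B
   (i.e. the product in the radical square zero algebra of Q_B). *)
Definition d1coef (k : fieldType) (a : E) (g : gV + E) (a1 a2 : E) (g' : gV + E) : k :=
  ((a1 == a) && (rszm gs gt g (inr a2) == Some g'))%:R
  + ((a2 == a) && (rszm gs gt (inr a1) g == Some g'))%:R.

(* Z_spp = 0 : every x in k((Q_B)_1||B_B) supported on the pairs alpha^*||p^*
   with (alpha,p) special and lying in Ker delta^1_B is zero. *)
Definition Zspp_zero (k : fieldType) : Prop :=
  forall x : E -> gV + E -> k,
    (forall a g, x a g != 0 -> exists p, special a p && (star p == g)) ->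
    (forall a1 a2 g', gt a1 == gs a2 ->
        \sum_(a : E) \sum_(g : gV + E) x a g * d1coef k a g a1 a2 g' = 0) ->
    forall a g, x a g = 0.
End Glue.

(* Over a field with 2 <> 0, a derivation of a radical square zero algebra kQ/I
   sends each vertex e_i to a combination of the arrows with exactly one end at i,
   with opposite coefficients at the two ends of each arrow, and each arrow to a
   combination of parallel arrows; it is inner iff its arrow-to-arrow block is
   diagonal, of the form a |-> (lam (s a) - lam (t a)) a, for a potential lam on the
   vertices.  When Z_spp = 0, two arrows are parallel in Q_B iff they are parallel
   in Q_A, so D |-> (arrow-to-arrow block of D) maps Der(B) onto Der(A) modulo inner
   derivations.  The only information it loses is the value lam(e_1) - lam(e_n) of
   a potential, which gluing forces to vanish; it is measured by
   D |-> sum_a w_a D(a)_a for a flow w from e_1 to e_n in Q_A, which exists because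
   e_1 and e_n lie in the same block.  Averaging w over classes of parallel arrows
   (possible in characteristic 0) makes this functional vanish on commutators. *)

From mathcomp Require Import all_boot all_algebra.
From mathcomp Require Import ring.
Set Implicit Arguments. Unset Strict Implicit. Unset Printing Implicit Defensive.
Import GRing.Theory.
Local Open Scope ring_scope.

Section StructureConstants.
Variables (k : fieldType) (B : finType) (m : B -> B -> option B).
Local Notation elt := {ffun B -> k}.
Local Notation endo := {ffun B -> {ffun B -> k}}.

Lemma dltE (b d : B) : dlt k b d = (d == b)%:R.
Proof. by rewrite ffunE. Qed.

Lemma mulmE (x y : elt) d :
  mulm m x y d = \sum_b \sum_c x b * y c * (m b c == Some d)%:R.
Proof.
rewrite /mulm sum_ffunE; apply: eq_bigr => b _; rewrite sum_ffunE.
apply: eq_bigr => c _; rewrite /scl ffunE.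
by case: (m b c) => [e|] /=; rewrite ?ffunE ?mulr0 // eq_sym.
Qed.

Lemma mulm_dlt b c : mulm m (dlt k b) (dlt k c) = oapp (@dlt k B) 0 (m b c).
Proof.
apply/ffunP=> d; rewrite mulmE (big_only1 b) // => [|b' nb _]; last first.
  by apply: big1 => c' _; rewrite dltE (negbTE nb) !mul0r.
rewrite (big_only1 c) // => [|c' nc _]; last by rewrite !dltE (negbTE nc) mulr0 mul0r.
rewrite !dltE !eqxx !mul1r.
by case: (m b c) => [e|] /=; rewrite ?ffunE // eq_sym.
Qed.

Lemma appE (M : endo) x d : app M x d = \sum_b x b * M b d.
Proof. by rewrite /app sum_ffunE; apply: eq_bigr => b _; rewrite /scl ffunE. Qed.

Lemma app_dlt (M : endo) b : app M (dlt k b) = M b.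
Proof.
apply/ffunP=> d; rewrite appE (big_only1 b) ?dltE ?eqxx ?mul1r // => c nc _.
by rewrite dltE (negbTE nc) mul0r.
Qed.

Lemma lbrE (M N : endo) b d :
  lbr M N b d = \sum_c N b c * M c d - \sum_c M b c * N c d.
Proof. by rewrite /lbr /comp !ffunE !appE. Qed.

Lemma isInn0 : isInn m (0 : endo).
Proof.
exists 0 => b; apply/ffunP=> d; rewrite !ffunE !mulmE !big1 ?subr0 // => b' _;
  by apply: big1 => c _; rewrite !ffunE ?mulr0 ?mul0r.
Qed.

Lemma isDer_coord (M : endo) : isDer m M <->
  (forall b c d, oapp M 0 (m b c) d = mulm m (M b) (dlt k c) d + mulm m (dlt k b) (M c) d).
Proof.
have appMm b c : app M (mulm m (dlt k b) (dlt k c)) = oapp M 0 (m b c).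
  rewrite mulm_dlt; case: (m b c) => [e|] /=; rewrite ?app_dlt //.
  by apply/ffunP=> d; rewrite appE !ffunE big1 // => b' _; rewrite ffunE mul0r.
split=> H b c; first by move=> d; rewrite -appMm H ffunE.
by apply/ffunP=> d; rewrite appMm H ffunE.
Qed.
End StructureConstants.

Section SumEq.
Variables (X Y : eqType).
Lemma eq_inl (x x' : X) : (inl x == inl x' :> X + Y) = (x == x'). Proof. by []. Qed.
Lemma eq_inr (y y' : Y) : (inr y == inr y' :> X + Y) = (y == y'). Proof. by []. Qed.
Lemma eq_inl_inr x y : (inl x == inr y :> X + Y) = false. Proof. by []. Qed.
Lemma eq_inr_inl x y : (inr y == inl x :> X + Y) = false. Proof. by []. Qed.
Definition sum_eqE := (eq_inl, eq_inr, eq_inl_inr, eq_inr_inl).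
End SumEq.

Lemma sumr_inr (R : nmodType) (X Y : finType) (F : X + Y -> R) :
  (forall x, F (inl x) = 0) -> \sum_c F c = \sum_y F (inr y).
Proof. by move=> F0; rewrite big_sumType /= big1 ?add0r. Qed.

Section RadicalSquareZero.
Variables (k : fieldType) (V E : finType) (s t : E -> V).
Local Notation m := (rszm s t).
Local Notation elt := {ffun V + E -> k}.
Local Notation endo := {ffun V + E -> {ffun V + E -> k}}.

Lemma rszm_eq_some b c d : (m b c == Some d) =
  ((b == d) && (c == inl (tgtb t d))) || ((c == d) && (b == inl (srcb s d))).
Proof.
case: b => [i|a]; case: c => [j|a']; case: d => [l|x] /=;
  rewrite ?orbF ?andbF ?andbb //; try (case: ifP => //);
  by repeat (case: eqP => //=); congruence.
Qed.

Lemma mul_rsz_inl (x y : elt) i : mulm m x y (inl i) = x (inl i) * y (inl i).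
Proof.
rewrite mulmE (big_only1 (inl i)) // => [|b nb _]; last first.
  by apply: big1 => c _; rewrite rszm_eq_some /= (negbTE nb) andbF mulr0.
rewrite (big_only1 (inl i)) // => [|c nc _]; last first.
  by rewrite rszm_eq_some /= (negbTE nc) andbF mulr0.
by rewrite rszm_eq_some /= !eqxx mulr1.
Qed.

Lemma mul_rsz_inr (x y : elt) a :
  mulm m x y (inr a) = x (inr a) * y (inl (t a)) + x (inl (s a)) * y (inr a).
Proof.
rewrite mulmE (bigD1 (inr a)) // [X in _ + X = _](bigD1 (inl (s a))) //
  [X in _ + (_ + X) = _]big1;
  last by move=> b /andP[na nsa]; apply: big1 => c _;
          rewrite rszm_eq_some /= (negbTE na) (negbTE nsa) andbF mulr0.
rewrite addr0; congr (_ + _).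
  rewrite (big_only1 (inl (t a))) // => [|c nc _]; rewrite rszm_eq_some /= !sum_eqE.
    by rewrite !eqxx mulr1.
  by rewrite (negbTE nc) !andbF mulr0.
rewrite (big_only1 (inr a)) // => [|c nc _]; rewrite rszm_eq_some /= !sum_eqE.
  by rewrite !eqxx /= mulr1.
by rewrite (negbTE nc) /= mulr0.
Qed.

Lemma ad_rsz_inl (a : elt) b i : (mulm m a (dlt k b) - mulm m (dlt k b) a) (inl i) = 0.
Proof. by rewrite !ffunE !mul_rsz_inl mulrC subrr. Qed.

Lemma ad_rsz_inr (a : elt) b x : (mulm m a (dlt k b) - mulm m (dlt k b) a) (inr x) =
  a (inr x) * ((inl (t x) == b)%:R - (inl (s x) == b)%:R)
  + (inr x == b)%:R * (a (inl (s x)) - a (inl (t x))).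
Proof. rewrite !ffunE !mul_rsz_inr !dltE; ring. Qed.

Definition isRszDer (M : endo) : Prop :=
  [/\ forall i j, M (inl i) (inl j) = 0,
      forall i a, (s a == i) = (t a == i) -> M (inl i) (inr a) = 0,
      forall a, s a != t a -> M (inl (s a)) (inr a) + M (inl (t a)) (inr a) = 0,
      forall a j, M (inr a) (inl j) = 0 &
      forall a x, ~~ parb s t (inr a) (inr x) -> M (inr a) (inr x) = 0].

Lemma isRszDer_of_isDer (M : endo) : (2%:R != 0 :> k) -> isDer m M -> isRszDer M.
Proof.
move=> two /isDer_coord H.
have double0 (z : k) : z = z + z -> z = 0.
  by move/(congr1 (fun y => y - z)); rewrite subrr addrK.
split.
- move=> i j; have := H (inl i) (inl i) (inl j).
  rewrite /= eqxx /= !mul_rsz_inl !dltE !sum_eqE.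
  by case: eqP => [->|_]; rewrite ?mulr1 ?mul1r ?mulr0 ?mul0r ?addr0 //; apply: double0.
- move=> i a e; have := H (inl i) (inl i) (inr a).
  rewrite /= eqxx /= !mul_rsz_inr !dltE !sum_eqE.
  case: (eqVneq (s a) i) => [si|nsi]; rewrite -e.
    by rewrite si eqxx !mulr1 !mul1r !mulr0 !mul0r !addr0 !add0r; apply: double0.
  by rewrite (negbTE nsi) !mulr0 !mul0r !addr0.
- move=> a ne; have := H (inl (s a)) (inl (t a)) (inr a).
  rewrite /= (negbTE ne) /= !mul_rsz_inr !dltE !sum_eqE !eqxx.
  by rewrite mulr1 mul1r !mulr0 !mul0r addr0 add0r ffunE.
- move=> a j; case: (eqVneq j (t a)) => [->|njt]; last first.
    have := H (inr a) (inl (t a)) (inl j).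
    by rewrite /= eqxx /= !mul_rsz_inl !dltE !sum_eqE (negbTE njt) mulr0 mul0r addr0.
  case: (eqVneq (s a) (t a)) => [st|nst].
    have := H (inr a) (inr a) (inr a).
    rewrite /= ffunE !mul_rsz_inr !dltE !sum_eqE !eqxx.
    rewrite !mulr0 !mul0r !mulr1 !mul1r add0r addr0 st.
    by move/esym/eqP; rewrite -mulr2n -mulr_natr mulf_eq0 (negbTE two) orbF => /eqP.
  have := H (inl (s a)) (inr a) (inl (t a)).
  by rewrite /= eqxx /= !mul_rsz_inl !dltE !sum_eqE eq_sym (negbTE nst) mulr0 mul0r add0r.
move=> a x; rewrite /parb /= => npar.
have nax : x != a by apply: contraNneq npar => ->; rewrite !eqxx.
case: (eqVneq (t a) (t x)) => [tt|ntt].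
  have := H (inl (s a)) (inr a) (inr x).
  rewrite /= eqxx /= !mul_rsz_inr !dltE !sum_eqE (negbTE nax) !mulr0 !mul0r !add0r.
  by move: npar; rewrite tt eqxx andbT eq_sym => /negbTE ->; rewrite mul0r.
have := H (inr a) (inl (t a)) (inr x).
rewrite /= eqxx /= !mul_rsz_inr !dltE !sum_eqE (negbTE nax) !mulr0 !mul0r !addr0.
by rewrite eq_sym (negbTE ntt) mulr0.
Qed.

Lemma isDer_of_isRszDer (M : endo) : isRszDer M -> isDer m M.
Proof.
case=> d1 d2 d3 d4 d5; apply/isDer_coord => b c d.
case: b => [i|a]; case: c => [j|b]; case: d => [l|x];
  rewrite /= ?mul_rsz_inl ?mul_rsz_inr !dltE !sum_eqE ?d1 ?d4 ?mulr0 ?mul0r ?addr0 ?add0r.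
- by case: ifP => _ /=; rewrite ?d1 ?ffunE.
- case: (eqVneq i j) => [<-|nij] /=.
    case e1: (s x == i); case e2: (t x == i);
      rewrite ?mulr1 ?mul1r ?mulr0 ?mul0r ?addr0 ?add0r //.
    1,2: by rewrite d2 ?e1 ?e2 ?addr0.
  rewrite ffunE.
  case: (eqVneq (s x) i) => [si|nsi]; case: (eqVneq (t x) j) => [tj|ntj];
    rewrite ?mulr1 ?mul1r ?mulr0 ?mul0r ?addr0 ?add0r //.
  + by rewrite -si -tj d3 // si tj.
  + by rewrite d2 // si (negbTE nij) (negbTE ntj).
  + by rewrite d2 // (negbTE nsi) tj eq_sym (negbTE nij).
- by case: ifP => _ /=; rewrite ?d4 ?ffunE.
- case: (boolP (parb s t (inr b) (inr x))) => [/andP[/eqP /= sbx _]|np]; last first.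
    by rewrite d5 // mulr0; case: ifP => _ /=; rewrite ?d5 ?ffunE.
  by rewrite sbx; case: ifP => _ /=; rewrite ?mul1r ?mul0r ?ffunE.
- by case: ifP => _ /=; rewrite ?d4 ?ffunE.
- case: (boolP (parb s t (inr a) (inr x))) => [/andP[_ /eqP /= tax]|np]; last first.
    by rewrite d5 // mul0r; case: ifP => _ /=; rewrite ?d5 ?ffunE.
  by rewrite tax; case: ifP => _ /=; rewrite ?mulr1 ?mulr0 ?ffunE.
- by rewrite ffunE.
- by rewrite ffunE.
Qed.

Lemma isRszDerB (M N : endo) : isRszDer M -> isRszDer N -> isRszDer (M - N).
Proof.
case=> [m1 m2 m3 m4 m5] [n1 n2 n3 n4 n5].
split=> [i j|i a e|a ne|a j|a x np]; rewrite !ffunE.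
- by rewrite m1 n1 subr0.
- by rewrite m2 ?n2 ?subr0.
- by rewrite addrACA -opprD m3 // n3 // subr0.
- by rewrite m4 n4 subr0.
- by rewrite m5 ?n5 ?subr0.
Qed.

Lemma isInn_rszP (M : endo) : isRszDer M -> isInn m M <->
  exists lam : V -> k, forall a x, M (inr a) (inr x) = (x == a)%:R * (lam (s x) - lam (t x)).
Proof.
case=> d1 d2 d3 d4 _; split=> [[c Hc]|[lam Hlam]].
  exists (fun v => c (inl v)) => a x.
  by rewrite Hc ad_rsz_inr !sum_eqE subrr mulr0 add0r.
exists [ffun b => match b with
  | inl v => lam v
  | inr x => if s x != t x then M (inl (t x)) (inr x) else 0 end].
move=> b; apply/ffunP => d; case: b => [u|a]; case: d => [l|x];
  rewrite ?ad_rsz_inl ?ad_rsz_inr ?ffunE /= ?sum_eqE ?d1 ?d4 //.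
  rewrite mul0r addr0.
  case: (eqVneq (s x) (t x)) => [e|ne] /=; first by rewrite mul0r d2 // e.
  case: (eqVneq (t x) u) => [<-|nt]; first by rewrite (negbTE ne) subr0 mulr1.
  case: (eqVneq (s x) u) => [<-|ns].
    by rewrite sub0r mulrN1; apply/eqP; rewrite -addr_eq0 d3.
  by rewrite subrr mulr0 d2 // (negbTE nt) (negbTE ns).
by rewrite subrr mulr0 add0r Hlam.
Qed.

Definition arrow_block (N : E -> E -> k) : endo :=
  [ffun b => [ffun d => if (b, d) is (inr a, inr x) then N a x else 0]].

Lemma arrow_block_der N :
  (forall a x, ~~ parb s t (inr a) (inr x) -> N a x = 0) -> isDer m (arrow_block N).
Proof. by move=> HN; apply: isDer_of_isRszDer; split=> *; rewrite !ffunE ?addr0 ?HN. Qed.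

Lemma eq_arrow_block N N' : N =2 N' -> arrow_block N = arrow_block N'.
Proof.
by move=> eqN; apply/ffunP=> b; apply/ffunP=> d; rewrite !ffunE; case: b d => [?|a] [?|x].
Qed.

Lemma lbr_inr (M N : endo) a x :
  (forall a j, M (inr a) (inl j) = 0) -> (forall a j, N (inr a) (inl j) = 0) ->
  lbr M N (inr a) (inr x) =
  \sum_y N (inr a) (inr y) * M (inr y) (inr x) - \sum_y M (inr a) (inr y) * N (inr y) (inr x).
Proof.
by move=> M0 N0; rewrite lbrE !sumr_inr // => j; rewrite ?M0 ?N0 mul0r.
Qed.

Lemma lbr_arrow_block N1 N2 : lbr (arrow_block N1) (arrow_block N2) =
  arrow_block (fun a x => \sum_y N2 a y * N1 y x - \sum_y N1 a y * N2 y x).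
Proof.
apply/ffunP=> b; apply/ffunP=> d; case: b d => [v|a] [l|x].
- by rewrite lbrE !ffunE !big1 ?subr0 // => c _; rewrite !ffunE mul0r.
- by rewrite lbrE !ffunE !big1 ?subr0 // => c _; rewrite !ffunE mul0r.
- by rewrite lbrE !ffunE !big1 ?subr0 // => c _; rewrite !ffunE; case: c => *; rewrite mulr0.
rewrite lbr_inr => [|*|*]; rewrite !ffunE //.
by congr (_ - _); apply: eq_bigr => y _; rewrite !ffunE.
Qed.
End RadicalSquareZero.

Section Flows.
Variables (k : fieldType) (V E : finType) (s t : E -> V).
Local Notation par a b := (parb s t (inr a) (inr b)).

Definition is_flow (w : E -> k) (x y : V) : Prop :=
  forall phi : V -> k, \sum_a w a * (phi (s a) - phi (t a)) = phi x - phi y.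

Lemma connect_flow x y : connect (adj s t) x y -> exists w, is_flow w x y.
Proof.
move/connectP=> [p pp ->] {y}; elim: p x pp => [|z p IH] x /=.
  by move=> _; exists (fun _ => 0) => phi; rewrite subrr big1 // => a _; rewrite mul0r.
case/andP=> /existsP[a ha] /IH[w Hw].
pose e : k := if (s a == x) && (t a == z) then 1 else -1.
exists (fun b => w b + e * (b == a)%:R) => phi.
under eq_bigr do rewrite mulrDl -mulrA.
rewrite big_split /= Hw -mulr_sumr (big_only1 a) // => [|b nb _];
  last by rewrite (negbTE nb) mul0r.
rewrite eqxx mul1r /e.
by case: ifP ha => [/andP[/eqP -> /eqP ->] _|_ /= /andP[/eqP -> /eqP ->]]; ring.
Qed.

Lemma par_sym a b : par a b = par b a.
Proof. by rewrite /parb /= [s a == _]eq_sym [t a == _]eq_sym. Qed.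

Lemma par_eq a b c : par a b -> par a c = par b c.
Proof. by rewrite /parb /= => /andP[/eqP -> /eqP ->]. Qed.

Hypothesis hchar : [pchar k] =i pred0.

Lemma flow_par_invariant w x y : is_flow w x y ->
  exists w', is_flow w' x y /\ forall a b, par a b -> w' a = w' b.
Proof.
move=> Hw; pose cnt a : k := \sum_b (par a b)%:R.
have cnt_neq0 a : cnt a != 0.
  rewrite /cnt -natr_sum (pcharf0P _).1 // -lt0n (bigD1 a) //=.
  by rewrite /parb !eqxx.
have cnt_par a b : par a b -> cnt a = cnt b.
  by move=> pab; apply: eq_bigr => c _; rewrite (par_eq _ pab).
pose avg a := (\sum_b (par a b)%:R * w b) / cnt a.
exists avg; split=> [phi|a b pab]; last first.
  by rewrite /avg (cnt_par _ _ pab); under eq_bigr do rewrite (par_eq _ pab).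
rewrite -Hw.
transitivity (\sum_a \sum_b (par a b)%:R * (w b * (phi (s b) - phi (t b)) / cnt b)).
  apply: eq_bigr => a _; rewrite /avg mulrAC !mulr_suml; apply: eq_bigr => b _.
  case: (boolP (par a b)) => pab; last by rewrite !mul0r.
  rewrite (cnt_par _ _ pab) !mul1r.
  by move: pab; rewrite /parb /= => /andP[/eqP -> /eqP ->].
rewrite exchange_big /=; apply: eq_bigr => b _.
rewrite -mulr_suml (eq_bigr (fun a => (par b a)%:R)) => [|a _]; last by rewrite par_sym.
by rewrite mulrC divfK.
Qed.
End Flows.

Section Gluing.
Variables (k : fieldType) (V E : finType) (s t : E -> V) (v1 vn : V) (hne : v1 != vn).
Local Notation glue := (glue hne).
Local Notation gs := (gs s hne).
Local Notation gt := (gt t hne).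

Lemma val_glue v : val (glue v) = if v != vn then v else v1.
Proof. by rewrite /glue val_insubd. Qed.

Lemma glue_vn : glue vn = glue v1.
Proof. by apply: val_inj; rewrite !val_glue hne eqxx. Qed.

Lemma glue_factor (lam : V -> k) v : lam v1 = lam vn -> lam (val (glue v)) = lam v.
Proof. by rewrite val_glue; case: eqP => [-> ->|]. Qed.

Lemma glue_eq u v : glue u = glue v -> u != v -> (u == v1) || (u == vn).
Proof.
move/(congr1 val); rewrite !val_glue.
case: (eqVneq u vn) => [->|nu]; first by rewrite orbT.
by case: (eqVneq v vn) => [_|_] /= ->; rewrite eqxx.
Qed.

Lemma par_glue a x : parb s t (inr a) (inr x) -> parb gs gt (inr a) (inr x).
Proof. by case/andP=> /= /eqP e1 /eqP e2; rewrite /parb /= /gs /gt e1 e2 !eqxx. Qed.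

(* For arrows alpha, x the element alpha^*||x^* lies in Ker delta^1_B, since
   substituting an arrow for an arrow in a path of length 2 gives a path of length 2. *)
Lemma Zspp_zero_par_unglue : Zspp_zero s t hne k ->
  forall a x, parb gs gt (inr a) (inr x) -> parb s t (inr a) (inr x).
Proof.
move=> hZ a x pB; apply/negPn/negP => npA.
pose delta_ax (a' : E) (g : gV vn + E) : k := ((a' == a) && (g == inr x))%:R.
suff : delta_ax a (inr x) = 0 by rewrite /delta_ax !eqxx => /eqP; rewrite oner_eq0.
apply: hZ => [a' g|a1 a2 g' _]; last first.
  apply: big1 => a' _; apply: big1 => -[u|y]; first by rewrite /delta_ax andbF mul0r.
  by rewrite /d1coef /= !andbF addr0 mulr0.
rewrite /delta_ax; case: (eqVneq a' a) => [->|]; last by rewrite eqxx.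
case: (eqVneq g (inr x)) => [-> _|]; last by rewrite eqxx.
exists (inr x); rewrite /special /= pB npA eqxx !andbT.
move: pB npA; rewrite /parb /= /gs /gt => /andP[/eqP e1 /eqP e2].
case: (eqVneq (s a) (s x)) => [_ /= nt|ns _].
  by case/orP: (glue_eq e2 nt) => ->; rewrite !orbT.
by case/orP: (glue_eq e1 ns) => ->; rewrite ?orbT.
Qed.
End Gluing.

Section GluedDerivations.
Variables (k : fieldType) (V E : finType) (s t : E -> V) (v1 vn : V) (hne : v1 != vn).
Hypothesis two_neq0 : 2%:R != 0 :> k.
Hypothesis par_unglue :
  forall a x, parb (gs s hne) (gt t hne) (inr a) (inr x) -> parb s t (inr a) (inr x).
Variable w : E -> k.
Hypothesis w_flow : is_flow s t w v1 vn.
Hypothesis w_par : forall a b, parb s t (inr a) (inr b) -> w a = w b.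

Local Notation mA := (rszm s t).
Local Notation mB := (rszm (gs s hne) (gt t hne)).
Local Notation endoA := {ffun V + E -> {ffun V + E -> k}}.
Local Notation endoB := {ffun gV vn + E -> {ffun gV vn + E -> k}}.

Definition arrow_part (D : endoB) : endoA := arrow_block V (fun a x => D (inr a) (inr x)).

Definition flow_trace (D : endoB) : k := \sum_a w a * D (inr a) (inr a).

Lemma arrow_part_der D : isDer mB D -> isDer mA (arrow_part D).
Proof.
case/(isRszDer_of_isDer two_neq0)=> _ _ _ _ D_par; apply: arrow_block_der => a x npA.
by apply: D_par; apply: contra npA; exact: par_unglue.
Qed.

Lemma arrow_part_linear c D1 D2 :
  arrow_part (sclE c D1 + D2) = sclE c (arrow_part D1) + arrow_part D2.
Proof.
apply/ffunP=> b; apply/ffunP=> d; rewrite !ffunE.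
by case: b d => [?|a] [?|x]; rewrite ?ffunE ?mulr0 ?addr0.
Qed.

Lemma flow_trace_linear c D1 D2 :
  flow_trace (sclE c D1 + D2) = c * flow_trace D1 + flow_trace D2.
Proof.
rewrite /flow_trace mulr_sumr -big_split /=; apply: eq_bigr => a _; rewrite !ffunE; ring.
Qed.

Lemma arrow_part_inner D : isDer mB D ->
  (isInn mA (arrow_part D) /\ flow_trace D = 0 <-> isInn mB D).
Proof.
move=> hD; have dB := isRszDer_of_isDer two_neq0 hD.
have dA := isRszDer_of_isDer two_neq0 (arrow_part_der hD).
split=> [[/(isInn_rszP dA) [lam Hlam] tr0]|/(isInn_rszP dB) [psi Hpsi]].
  have {}Hlam a x : D (inr a) (inr x) = (x == a)%:R * (lam (s x) - lam (t x)).
    by rewrite -Hlam !ffunE.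
  have lam_glued : lam v1 = lam vn.
    have : flow_trace D = lam v1 - lam vn.
      by rewrite -(w_flow lam); apply: eq_bigr => a _; rewrite Hlam eqxx mul1r.
    by rewrite tr0 => /eqP; rewrite eq_sym subr_eq0 => /eqP.
  apply/(isInn_rszP dB); exists (fun u => lam (val u)) => a x.
  by rewrite Hlam /gs /gt !glue_factor.
split.
  by apply/(isInn_rszP dA); exists (fun v => psi (glue hne v)) => a x; rewrite !ffunE Hpsi.
rewrite /flow_trace; under eq_bigr do rewrite Hpsi eqxx mul1r.
by rewrite (w_flow (fun v => psi (glue hne v))) glue_vn subrr.
Qed.

Lemma arrow_part_surj D' c : isDer mA D' ->
  exists D, [/\ isDer mB D, isInn mA (arrow_part D - D') & flow_trace D = c].
Proof.
move=> hD'; have dA' := isRszDer_of_isDer two_neq0 hD'.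
(* D - D' is the diagonal block of the potential kap [v == v1]: inner in A, and adding it
   shifts flow_trace by kap. *)
pose kap := c - \sum_a w a * D' (inr a) (inr a).
pose lam v : k := kap * (v == v1)%:R.
pose D := arrow_block (gV vn)
  (fun a x => D' (inr a) (inr x) + (x == a)%:R * (lam (s x) - lam (t x))).
have hD : isDer mB D.
  apply: arrow_block_der => a x npB; case: dA' => _ _ _ _ -> //; last first.
    by apply: contra npB; exact: par_glue.
  have -> : (x == a) = false by apply: contraNF npB => /eqP ->; rewrite /parb !eqxx.
  by rewrite mul0r addr0.
exists D; split=> //.
  have dAD := isRszDerB (isRszDer_of_isDer two_neq0 (arrow_part_der hD)) dA'.
  by apply/(isInn_rszP dAD); exists lam => a x; rewrite !ffunE addrAC subrr add0r.
rewrite /flow_trace; under eq_bigr do rewrite !ffunE eqxx mul1r mulrDr.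
rewrite big_split /= w_flow /lam eqxx eq_sym (negbTE hne) mulr1 mulr0 subr0.
by rewrite /kap addrC subrK.
Qed.

Lemma arrow_part_lbr D1 D2 : isDer mB D1 -> isDer mB D2 ->
  arrow_part (lbr D1 D2) = lbr (arrow_part D1) (arrow_part D2).
Proof.
move=> /(isRszDer_of_isDer two_neq0) [_ _ _ D1_0 _].
move=> /(isRszDer_of_isDer two_neq0) [_ _ _ D2_0 _].
by rewrite lbr_arrow_block; apply: eq_arrow_block => a x; rewrite lbr_inr.
Qed.

Lemma flow_trace_lbr D1 D2 : isDer mB D1 -> isDer mB D2 -> flow_trace (lbr D1 D2) = 0.
Proof.
move=> /(isRszDer_of_isDer two_neq0) [_ _ _ D1_0 _].
move=> /(isRszDer_of_isDer two_neq0) [_ _ _ D2_0 D2_par].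
have w_D2 a y : w a * D2 (inr a) (inr y) = w y * D2 (inr a) (inr y).
  case: (boolP (parb (gs s hne) (gt t hne) (inr a) (inr y))) => pB.
    by rewrite (w_par (par_unglue pB)).
  by rewrite D2_par ?mulr0.
rewrite /flow_trace.
under eq_bigr do rewrite lbr_inr // mulrBr !mulr_sumr.
rewrite sumrB; apply/eqP; rewrite subr_eq0; apply/eqP.
rewrite exchange_big /=; apply: eq_bigr => a _; apply: eq_bigr => y _.
by rewrite mulrA w_D2 mulrA mulrAC.
Qed.
End GluedDerivations.

Theorem corollary3p28 (k : fieldType) (V E : finType) (s t : E -> V)
  (v1 vn : V)
  (hchar : [pchar k] =i pred0)
  (hne : v1 != vn)
  (hiso1 : non_isolated s t v1) (hison : non_isolated s t vn)
  (hblock : same_block s t v1 vn)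
  (hZ : Zspp_zero s t hne k) :
  HH1_iso_times_k k (rszm (gs s hne) (gt t hne)) (rszm s t).
Proof.
have two_neq0 : 2%:R != 0 :> k by rewrite (pcharf0P _).1.
have par_unglue := Zspp_zero_par_unglue hZ.
have [w0 w0_flow] := connect_flow k hblock.
have [w [w_flow w_par]] := flow_par_invariant hchar w0_flow.
exists (@arrow_part k V E vn), (flow_trace w); split.
- exact: arrow_part_der.
- by move=> c D1 D2 _ _; rewrite arrow_part_linear flow_trace_linear.
- exact: arrow_part_inner.
- exact: arrow_part_surj.
- move=> D1 D2 h1 h2; rewrite (arrow_part_lbr two_neq0 h1 h2) subrr.
  by split; [exact: isInn0 | exact: (flow_trace_lbr two_neq0 par_unglue w_par h1 h2)].
Qed.
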